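(* Let $Z$ be a random vector in $\mathbb{R}^d$ with a probability density $\mu_Z$ such that $\|Z\|$ is $\sqrt d\sigma_Z$-sub-Gaussian. Let $\overline{\alpha}=\inf\{\alpha:\mathbb{P}[\|Z\|\le\alpha]=1\}\in(0,\infty]$. For $\alpha\in(0,\overline\alpha)$ let $V\sim\mathrm{Uniform}[0,\alpha]$ be independent of $Z$ and define $U_\alpha=Z$ if $\|Z\|\le\alpha$ and $U_\alpha=\frac{Z}{\|Z\|}V$ otherwise, with distribution $\mu_{U_\alpha}$. Then \[ W_2(\mu_Z,\mu_{U_\alpha})\le\sqrt2\,(\alpha+\sqrt d\sigma_Z)\,e^{-\alpha^2/(2d\sigma_Z^2)}. \]
   Context: $W_2(\mu,\nu)=\inf\mathbb{E}^{1/2}\|U-V\|^2$ over couplings of $U\sim\mu$, $V\sim\nu$ is the second-order Wasserstein distance. A real random variable $A$ is $\sigma$-sub-Gaussian if $\inf\{t>0:\mathbb{E}\exp(A^2/t^2)\le2\}=\sigma<\infty$. *)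

From HB Require Import structures.
From mathcomp Require Import all_boot all_order all_algebra.
From mathcomp Require Import all_classical all_reals all_analysis.
From mathcomp Require Import measurable_realfun.
Set Implicit Arguments. Unset Strict Implicit. Unset Printing Implicit Defensive.
Import Order.TTheory GRing.Theory Num.Theory.
Import numFieldNormedType.Exports.
Local Open Scope classical_set_scope.
Local Open Scope ring_scope.

Section defs.
Context {R : realType}.

(* Points of R^d are d-tuples of reals, with the product (= Borel) sigma-algebra
   provided by mathcomp-analysis. *)

Definition enorm (d : nat) (x : d.-tuple R) : R :=
  Num.sqrt (\sum_(i < d) (tnth x i) ^+ 2).

Definition tscale (d : nat) (c : R) (x : d.-tuple R) : d.-tuple R :=
  map_tuple (fun y => c * y) x.

(* Lebesgue integral over R^d of a nonnegative function, as the iterated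
   one-dimensional Lebesgue integral (Tonelli). *)
Fixpoint lebesgue_int_Rd (n : nat) : (n.-tuple R -> \bar R) -> \bar R :=
  match n with
  | 0 => fun g => g [tuple]
  | n'.+1 => fun g =>
      (\int[@lebesgue_measure R]_x lebesgue_int_Rd (fun t => g (cons_tuple x t)))%E
  end.

Definition has_density (dO : measure_display) (Omega : measurableType dO)
  (P : probability Omega R) (d : nat) (X : Omega -> d.-tuple R) : Prop :=
  exists f : d.-tuple R -> \bar R,
    (forall x, (0 <= f x)%E) /\ measurable_fun [set: d.-tuple R] f /\
    forall A : set (d.-tuple R), measurable A ->
      P (X @^-1` A) = lebesgue_int_Rd (fun x => ((\1_A x)%:E * f x)%E).

Definition subgaussian (dO : measure_display) (Omega : measurableType dO)
  (P : probability Omega R) (A : Omega -> R) (sigma : R) : Prop :=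
  ereal_inf [set t%:E | t in [set t : R | 0 < t /\
      (\int[P]_w (expR (A w ^+ 2 / t ^+ 2))%:E <= 2%:E)%E]] = sigma%:E.

Definition independent2 (dO : measure_display) (Omega : measurableType dO)
  (P : probability Omega R) d1 d2 (T1 : measurableType d1) (T2 : measurableType d2)
  (X : Omega -> T1) (V : Omega -> T2) : Prop :=
  forall (A : set T1) (B : set T2), measurable A -> measurable B ->
    P (X @^-1` A `&` V @^-1` B) = (P (X @^-1` A) * P (V @^-1` B))%E.

Definition esqrt (x : \bar R) : \bar R :=
  match x with
  | r%:E => (Num.sqrt r)%:E
  | +oo%E => +oo%E
  | -oo%E => 0%E
  end.

Definition coupling (d : nat) (mu nu : set (d.-tuple R) -> \bar R)
  (pi : probability (d.-tuple R * d.-tuple R)%type R) : Prop :=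
  forall A : set (d.-tuple R), measurable A ->
    pi (fst @^-1` A) = mu A /\ pi (snd @^-1` A) = nu A.

Definition W2 (d : nat) (mu nu : set (d.-tuple R) -> \bar R) : \bar R :=
  ereal_inf [set esqrt (\int[pi]_p ((enorm (map_tuple (fun ij => ij.1 - ij.2)
                                    (zip_tuple p.1 p.2))) ^+ 2)%:E)%E
            | pi in [set pi | coupling mu nu pi]].

End defs.

(* Couple [Z] with [U_alpha] on the same probability space. Then
   [|Z - U_alpha| = |Z| - V] on [|Z| > alpha] and [0] otherwise, and writing
   [|Z| = alpha + t q] with [1 + q^2 <= exp (q^2)] gives, for every [t > 0],
     [|Z - U_alpha|^2 <= (alpha + t)^2 exp (- alpha^2 / t^2) exp (|Z|^2 / t^2)].
   For [t] above the sub-Gaussian constant [s = sqrt d sigma_Z] the last factor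
   has expectation at most [2], so [E |Z - U_alpha|^2 <= 2 (alpha + t)^2
   exp (- alpha^2 / t^2)]; letting [t] decrease to [s] yields the bound on [W2]. *)

From HB Require Import structures.
From mathcomp Require Import all_boot all_order all_algebra.
From mathcomp Require Import all_classical all_reals all_analysis.
From mathcomp Require Import measurable_realfun.
From mathcomp Require Import ring lra.
Import Order.TTheory GRing.Theory Num.Theory.
Import numFieldNormedType.Exports.
Local Open Scope classical_set_scope.
Local Open Scope ring_scope.

Section real_bounds.
Context {R : realType}.

Definition gauss_tail (alpha t : R) : R :=
  (alpha + t) ^+ 2 * expR (- alpha ^+ 2 / t ^+ 2).

Lemma gauss_tail_ge0 alpha t : 0 <= gauss_tail alpha t.
Proof. by rewrite mulr_ge0 ?sqr_ge0 ?expR_ge0. Qed.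

Lemma sqr_le_gauss_tail (alpha t x : R) : 0 <= alpha -> alpha < x -> 0 < t ->
  x ^+ 2 <= gauss_tail alpha t * expR (x ^+ 2 / t ^+ 2).
Proof.
move=> a0 ax t0; set q := (x - alpha) / t.
have hx : x = alpha + t * q by rewrite /q mulrC divfK ?gt_eqF //; ring.
have q0 : 0 <= q by rewrite divr_ge0 ?subr_ge0 ?ltW.
(* [x^2 <= (1 + q^2) (alpha + t)^2 <= e^(q^2) (alpha + t)^2] and
   [q^2 <= (x^2 - alpha^2) / t^2]. *)
have hxq : x ^+ 2 <= (1 + q ^+ 2) * (alpha + t) ^+ 2.
  have := sqr_ge0 (alpha * q - t).
  have : 0 <= alpha * t * (1 + q ^+ 2).
    by rewrite !mulr_ge0 ?addr_ge0 ?sqr_ge0 // ltW.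
  rewrite hx; nra.
have hq : q ^+ 2 <= - alpha ^+ 2 / t ^+ 2 + x ^+ 2 / t ^+ 2.
  rewrite -mulrDl /q expr_div_n ler_pM2r ?invr_gt0 ?exprn_gt0 //; nra.
rewrite /gauss_tail -mulrA -expRD (le_trans hxq) // mulrC ler_wpM2l ?sqr_ge0 //.
by rewrite (le_trans (expR_ge1Dx _)) // ler_expR.
Qed.

(* Since [0^-1 = 0], [gauss_tail alpha 0] is [alpha^2]: this is the value the
   bound takes for a degenerate sub-Gaussian constant. *)
Lemma gauss_tail_half_le (alpha : R) : 0 < alpha ->
  gauss_tail alpha (alpha / 2) <= gauss_tail alpha 0.
Proof.
move=> a0; rewrite /gauss_tail expr0n invr0 mulr0 expR0 mulr1 addr0.
have -> : - alpha ^+ 2 / (alpha / 2) ^+ 2 = -4 by field; rewrite gt_eqF.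
have e4 : expR (-4) * 5 <= 1 :> R.
  have : expR (-4) * expR 4 = 1 :> R by rewrite -expRD addNr expR0.
  have := expR_ge1Dx (4 : R); have := expR_ge0 (-4 : R); nra.
have := expR_ge0 (-4 : R); nra.
Qed.

Lemma continuous_gauss_tail (alpha t : R) : t != 0 ->
  {for t, continuous (gauss_tail alpha)}.
Proof.
move=> t0; apply: continuousM.
  apply: (@continuous_comp _ _ _ (fun t => alpha + t) (fun y => y ^+ 2)).
    by apply: continuousD; [exact: cst_continuous | exact: cvg_id].
  exact: exprn_continuous.
have hexp : {for t, continuous (fun u : R => - alpha ^+ 2 / u ^+ 2)}.
  apply: continuousM; first exact: cst_continuous.
  by apply: continuousV; [rewrite expf_neq0 | exact: exprn_continuous].
exact: cvg_comp hexp (@continuous_expR R _).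
Qed.

Lemma mul2_gauss_tailE (alpha s : R) :
  2 * gauss_tail alpha s =
    (Num.sqrt 2 * (alpha + s) * expR (- alpha ^+ 2 / (2 * s ^+ 2))) ^+ 2.
Proof.
rewrite !exprMn sqr_sqrtr ?ler0n // -expRM_natl -mulrA.
by congr (_ * (_ * expR _)); rewrite [in RHS]invfM [RHS]mulrCA mulVKf ?pnatr_eq0.
Qed.

Lemma lee_at_right_continuous (f : R -> R) (s : R) (x : \bar R) :
  {for s, continuous f} -> (forall t, s < t -> (x <= (f t)%:E)%E) ->
  (x <= (f s)%:E)%E.
Proof.
move=> fs; case: x => [r | | ] hx; last by rewrite leNye.
- rewrite lee_fin; apply: cvgr_to_ge (cvg_at_right_filter fs) _.
  near=> t; rewrite -lee_fin; apply: hx; near: t; exact: nbhs_right_gt.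
- by have := hx (s + 1); rewrite ltrDl ltr01 leye_eq => /(_ isT).
Unshelve. all: by end_near.
Qed.

Lemma lee_gauss_tail (c alpha s : R) (x : \bar R) : 0 <= c -> 0 < alpha -> 0 <= s ->
  (forall t, s < t -> (x <= (c * gauss_tail alpha t)%:E)%E) ->
  (x <= (c * gauss_tail alpha s)%:E)%E.
Proof.
move=> c0 a0; rewrite le_eqVlt => /predU1P[<- | s0] hx.
  apply: le_trans (hx _ (divr_gt0 a0 (ltr0n _ 2))) _.
  by rewrite lee_fin ler_wpM2l // gauss_tail_half_le.
apply: lee_at_right_continuous hx; apply: continuousM; first exact: cst_continuous.
by apply: continuous_gauss_tail; rewrite gt_eqF.
Qed.

Lemma continuous_inv_maxr (alpha : R) : 0 < alpha ->
  continuous (fun x : R => (Num.max x alpha)^-1).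
Proof.
move=> a0 x; apply: (@continuousV R R (fun y => Num.max y alpha)).
  by rewrite gt_eqF // lt_max a0 orbT.
have hid : continuous (@id R) by move=> z; exact: cvg_id.
exact: max_fun_continuous hid (@cst_continuous R R alpha) x.
Qed.

Lemma esqrt_le (x : \bar R) (r : R) :
  0 <= r -> (x <= (r ^+ 2)%:E)%E -> (esqrt x <= r%:E)%E.
Proof.
case: x => [y | | ] r0 //=; rewrite ?lee_fin // => yr.
by rewrite -[leRHS](ger0_norm r0) -sqrtr_sqr ler_sqrt ?sqr_ge0.
Qed.

End real_bounds.

Section tuples.
Context {R : realType} {d : nat}.
Implicit Types (x y z : d.-tuple R).

Definition tsub x y : d.-tuple R :=
  map_tuple (fun ij => ij.1 - ij.2) (zip_tuple x y).

Definition radial_trunc (alpha v : R) z : d.-tuple R :=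
  if enorm z <= alpha then z else tscale (v / enorm z) z.

Lemma sqr_enorm z : enorm z ^+ 2 = \sum_(i < d) tnth z i ^+ 2.
Proof. by rewrite sqr_sqrtr // sumr_ge0 // => i _; exact: sqr_ge0. Qed.

Lemma tnth_tsub x y i : tnth (tsub x y) i = tnth x i - tnth y i.
Proof.
rewrite tnth_map (tnth_nth (tnth x i, tnth y i)) /= nth_zip ?size_tuple //.
by rewrite -!tnth_nth.
Qed.

Lemma sqr_enorm_sub_tscale c z :
  enorm (tsub z (tscale c z)) ^+ 2 = (1 - c) ^+ 2 * enorm z ^+ 2.
Proof.
rewrite !sqr_enorm big_distrr; apply: eq_bigr => i _.
by rewrite /= tnth_tsub tnth_map; ring.
Qed.

Lemma sqr_enorm_sub_radial_trunc (alpha v t : R) z :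
  0 <= v <= alpha -> 0 < t ->
  enorm (tsub z (radial_trunc alpha v z)) ^+ 2 <=
    gauss_tail alpha t * expR (enorm z ^+ 2 / t ^+ 2).
Proof.
move=> /andP[v0 va] t0; rewrite /radial_trunc; case: ifPn => [_ | ].
  rewrite sqr_enorm big1 => [|i _]; last by rewrite tnth_tsub subrr expr0n.
  by rewrite mulr_ge0 ?gauss_tail_ge0 ?expR_ge0.
rewrite -ltNge => az; have z0 : 0 < enorm z := le_lt_trans v0 (le_lt_trans va az).
apply: le_trans _ (sqr_le_gauss_tail _ _ _ (le_trans v0 va) az t0).
rewrite sqr_enorm_sub_tscale ler_piMl ?sqr_ge0 // exprn_ile1 //.
  by rewrite subr_ge0 ler_pdivrMr // mul1r (le_trans va) // ltW.
by rewrite lerBlDr lerDl divr_ge0 // ltW.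
Qed.

Lemma measurable_enorm : measurable_fun [set: d.-tuple R] (@enorm R d).
Proof.
apply: measurableT_comp; first exact: continuous_measurable_fun (@sqrt_continuous R).
by apply: measurable_sum => i; apply: measurable_funX; exact: measurable_tnth.
Qed.

Lemma measurable_tsub :
  measurable_fun [set: d.-tuple R * d.-tuple R] (fun p => tsub p.1 p.2).
Proof.
apply/measurable_fun_tnthP => i.
rewrite (_ : _ \o _ = fun p => tnth p.1 i - tnth p.2 i); last first.
  by apply: funext => p /=; rewrite tnth_tsub.
by apply: measurable_funB; apply: measurableT_comp (measurable_tnth i) _.
Qed.

End tuples.

Section radial_truncation.
Context {R : realType} {dO : measure_display} {Omega : measurableType dO}.
Context {P : probability Omega R} {d : nat}.

Lemma subgaussian_ge0 {A : Omega -> R} {s : R} : subgaussian P A s -> 0 <= s.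
Proof.
move=> hs; rewrite -lee_fin -hs; apply: le_ereal_inf_tmp => _ [t [t0 _] <-].
by rewrite lee_fin ltW.
Qed.

Lemma subgaussian_expR_le2 {A : Omega -> R} {s t : R} :
  measurable_fun [set: Omega] A -> subgaussian P A s -> s < t ->
  (\int[P]_w (expR (A w ^+ 2 / t ^+ 2))%:E <= 2%:E)%E.
Proof.
move=> mA hs st; have t0 := le_lt_trans (subgaussian_ge0 hs) st.
have : (ereal_inf [set u%:E | u in [set u : R | (0 < u)%R /\
    (\int[P]_w (expR (A w ^+ 2 / u ^+ 2))%:E <= 2%:E)%E]] < t%:E)%E.
  by rewrite hs lte_fin.
case/ereal_inf_lt => _ [u [u0 hu] <-]; rewrite lte_fin => ut.
have mexp v : measurable_fun [set: Omega] (fun w => (expR (A w ^+ 2 / v ^+ 2))%:E).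
  apply/measurable_EFinP; apply: measurableT_comp; first exact: measurable_expR.
  by apply: measurable_funM => //; exact: measurable_funX.
apply: le_trans hu; apply: ge0_le_integral => // w _.
rewrite lee_fin ler_expR ler_wpM2l ?sqr_ge0 // lef_pV2 ?posrE ?exprn_gt0 //.
by rewrite lerXn2r ?nnegrE ?ltW.
Qed.

Lemma ae_uniform_itv {V : Omega -> R} {alpha : R} :
  measurable_fun [set: Omega] V ->
  (forall B : set R, measurable B ->
     P (V @^-1` B) = (\int[@lebesgue_measure R]_(x in B) (uniform_pdf 0 alpha x)%:E)%E) ->
  {ae P, forall w, 0 <= V w <= alpha}.
Proof.
move=> mV hV; have mC : measurable (~` `[0, alpha]%classic : set R).
  by apply: measurableC; exact: measurable_itv.
exists (V @^-1` ~` `[0, alpha]); split.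
- by rewrite -[X in measurable X]setTI; exact: mV.
- rewrite hV //; apply: integral0_eq => x /= hx; rewrite /uniform_pdf ifF //.
  by apply/negP => h; apply: hx; rewrite in_itv.
- by move=> w /= hw hv; apply: hw; move: hv; rewrite in_itv.
Qed.

Lemma measurable_radial_trunc {Z : Omega -> d.-tuple R} {V : Omega -> R} {alpha : R} :
  0 < alpha -> measurable_fun [set: Omega] Z -> measurable_fun [set: Omega] V ->
  measurable_fun [set: Omega] (fun w => radial_trunc alpha (V w) (Z w)).
Proof.
move=> a0 mZ mV; have mnZ := measurableT_comp measurable_enorm mZ.
(* On the branch [alpha < enorm z], dividing by [max (enorm z) alpha] instead
   avoids the discontinuity of inversion at [0]. *)
rewrite (_ : (fun w => _) = fun w => if enorm (Z w) <= alpha then Z w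
   else tscale (V w * (Num.max (enorm (Z w)) alpha)^-1) (Z w)); last first.
  apply: funext => w; rewrite /radial_trunc; case: ifPn => // /negbTE h.
  by rewrite max_l // ltW // ltNge h.
apply: measurable_fun_ifT; first exact: measurable_fun_ler mnZ (measurable_cst _).
  exact: mZ.
apply/measurable_fun_tnthP => i.
rewrite (_ : _ \o _ = fun w => V w * (Num.max (enorm (Z w)) alpha)^-1 * tnth (Z w) i);
  last by apply: funext => w; rewrite /= /tscale tnth_map.
apply: measurable_funM; last exact: measurableT_comp (measurable_tnth i) mZ.
apply: measurable_funM => //.
have minv := continuous_measurable_fun (continuous_inv_maxr _ a0).
exact: measurableT_comp minv mnZ.
Qed.

Lemma W2_le_coupling {X Y : Omega -> d.-tuple R} :
  measurable_fun [set: Omega] X -> measurable_fun [set: Omega] Y ->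
  (W2 (pushforward P X) (pushforward P Y) <=
    esqrt (\int[P]_w (enorm (tsub (X w) (Y w)) ^+ 2)%:E))%E.
Proof.
move=> mX mY; have mXY := measurable_fun_pair mX mY.
pose XY : {mfun Omega >-> (d.-tuple R * d.-tuple R)%type} :=
  HB.pack (fun w => (X w, Y w)) (isMeasurableFun.Build _ _ _ _ _ mXY).
rewrite (_ : (\int[P]_w _ =
    \int[distribution P XY]_p (enorm (tsub p.1 p.2) ^+ 2)%:E)%E).
  by apply: ereal_inf_lbound; exists (distribution P XY).
rewrite ge0_integral_distribution // => [|p]; last by rewrite lee_fin sqr_ge0.
apply/measurable_EFinP; apply: measurable_funX.
exact: measurableT_comp measurable_enorm measurable_tsub.
Qed.

Lemma radial_trunc_cost_le (Z : Omega -> d.-tuple R) (V : Omega -> R) (alpha s t : R) :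
  0 < alpha -> measurable_fun [set: Omega] Z -> measurable_fun [set: Omega] V ->
  subgaussian P (fun w => enorm (Z w)) s ->
  (forall B : set R, measurable B ->
     P (V @^-1` B) = (\int[@lebesgue_measure R]_(x in B) (uniform_pdf 0 alpha x)%:E)%E) ->
  s < t ->
  (\int[P]_w (enorm (tsub (Z w) (radial_trunc alpha (V w) (Z w))) ^+ 2)%:E <=
    (2 * gauss_tail alpha t)%:E)%E.
Proof.
move=> a0 mZ mV hs hV st; have t0 := le_lt_trans (subgaussian_ge0 hs) st.
have mnZ := measurableT_comp measurable_enorm mZ.
have mZU := measurable_fun_pair mZ (measurable_radial_trunc a0 mZ mV).
have mexp : measurable_fun [set: Omega] (fun w => expR (enorm (Z w) ^+ 2 / t ^+ 2)).
  apply: measurableT_comp; first exact: measurable_expR.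
  by apply: measurable_funM => //; exact: measurable_funX.
apply: (@le_trans _ _ (\int[P]_w ((gauss_tail alpha t)%:E *
                                   (expR (enorm (Z w) ^+ 2 / t ^+ 2))%:E))%E).
  apply: ae_ge0_le_integral => //.
  - by move=> w _; rewrite lee_fin sqr_ge0.
  - apply/measurable_EFinP; apply: measurable_funX.
    exact: measurableT_comp measurable_enorm (measurableT_comp measurable_tsub mZU).
  - by move=> w _; rewrite -EFinM lee_fin mulr_ge0 ?gauss_tail_ge0 ?expR_ge0.
  - by apply: emeasurable_funM => //; exact/measurable_EFinP.
  move: (ae_uniform_itv mV hV); apply: filterS => w hv _.
  by rewrite -EFinM lee_fin sqr_enorm_sub_radial_trunc.
rewrite ge0_integralZl_EFin ?gauss_tail_ge0 //; last exact/measurable_EFinP.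
rewrite (mulrC 2) [leRHS]EFinM lee_wpmul2l ?lee_fin ?gauss_tail_ge0 //.
exact: subgaussian_expR_le2 mnZ hs st.
Qed.

End radial_truncation.

Theorem lemma19 (R : realType) (dO : measure_display) (Omega : measurableType dO)
  (P : probability Omega R) (d : nat)
  (Z : Omega -> d.-tuple R) (sigmaZ : R) (alpha : R) (V : Omega -> R) :
  measurable_fun [set: Omega] Z ->
  has_density P Z ->
  subgaussian P (fun w => enorm (Z w)) (Num.sqrt d%:R * sigmaZ) ->
  let alpha_bar := ereal_inf
    [set a%:E | a in [set a : R | P [set w | enorm (Z w) <= a] = 1%E]] in
  0 < alpha -> (alpha%:E < alpha_bar)%E ->
  measurable_fun [set: Omega] V ->
  (forall B : set R, measurable B ->
     P (V @^-1` B) = (\int[@lebesgue_measure R]_(x in B) (uniform_pdf 0 alpha x)%:E)%E) ->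
  independent2 P Z V ->
  let U_alpha := fun w => if enorm (Z w) <= alpha then Z w
                          else tscale (V w / enorm (Z w)) (Z w) in
  (W2 (pushforward P Z) (pushforward P U_alpha) <=
    (Num.sqrt 2 * (alpha + Num.sqrt d%:R * sigmaZ)
       * expR (- alpha ^+ 2 / (2 * d%:R * sigmaZ ^+ 2)))%:E)%E.
Proof.
(* The bound holds for the explicit coupling [(Z, U_alpha)]. *)
move=> mZ _ hs ? a0 _ mV hV _ /=.
have -> : 2 * d%:R * sigmaZ ^+ 2 = 2 * (Num.sqrt d%:R * sigmaZ) ^+ 2.
  by rewrite exprMn sqr_sqrtr ?mulrA.
move: (Num.sqrt d%:R * sigmaZ) hs => s hs; have s0 := subgaussian_ge0 hs.
apply: le_trans (W2_le_coupling mZ (measurable_radial_trunc a0 mZ mV)) _.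
apply: esqrt_le; first by rewrite !mulr_ge0 ?sqrtr_ge0 ?expR_ge0 ?addr_ge0 // ltW.
rewrite -mul2_gauss_tailE; apply: lee_gauss_tail => // t.
exact: radial_trunc_cost_le a0 mZ mV hs hV.
Qed.
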